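(* Let $x\in\mathbb{R}$ and let $f:\mathbb{R}\to\mathbb{R}$ be analytic and nonzero on the closed interval between $0$ and $x$, with $f(0)=1$, and suppose $f(y)=\exp\big(\sum_{i=1}^{\infty}c_i y^i\big)$ for all $y$ in that interval, the series converging there. For each positive integer $i$ put $f_i(y)=\exp(c_i y^i)$. Then for every positive integer $k$, \[ f_k(x)=\lim_{r\downarrow 1}\prod_{n=1}^{\infty}\left[ f\!\left(\frac{(r^k-1)^{1/k}x}{r^n}\right)\Big/\prod_{i<k} f_i\!\left(\frac{(r^k-1)^{1/k}x}{r^n}\right)\right]. \]
   Context: The coefficients $c_i$ are the Taylor coefficients at $0$ of $\log f$, so that $f=\prod_{i\ge1}f_i$; $f_i$ is called the $i$-th component of $f$. The product over $i<k$ runs over positive integers $i<k$. *)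

From HB Require Import structures.
From mathcomp Require Import all_boot all_order all_algebra.
From mathcomp Require Import all_classical all_reals all_analysis.
Set Implicit Arguments. Unset Strict Implicit. Unset Printing Implicit Defensive.
Import Order.TTheory GRing.Theory Num.Theory.
Import numFieldNormedType.Exports.
Local Open Scope ring_scope.
Local Open Scope classical_set_scope.

Definition between0 {R : realType} (x y : R) : Prop :=
  Num.min 0 x <= y <= Num.max 0 x.

Definition analytic_at {R : realType} (f : R -> R) (a : R) : Prop :=
  exists (b : nat -> R) (d : R), 0 < d /\
    forall y, `|y - a| < d ->
      (fun N => \sum_(i < N) b i * (y - a) ^+ i) @ \oo --> f y.

Definition logser {R : realType} (c : nat -> R) (y : R) (N : nat) : R :=
  \sum_(1 <= i < N) c i * y ^+ i.

Definition fcomp {R : realType} (c : nat -> R) (i : nat) (y : R) : R :=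
  expR (c i * y ^+ i).

Definition factor {R : realType} (f : R -> R) (c : nat -> R) (k : nat)
    (x r : R) (n : nat) : R :=
  let t := powR (r ^+ k - 1) (k%:R)^-1 * x / r ^+ n in
  f t / \prod_(1 <= i < k) fcomp c i t.

Definition partprod {R : realType} (f : R -> R) (c : nat -> R) (k : nat)
    (x r : R) (N : nat) : R :=
  \prod_(1 <= n < N) factor f c k x r n.

From Pilot Require Import Defs.
From HB Require Import structures.
From mathcomp Require Import all_boot all_order all_algebra.
From mathcomp Require Import all_classical all_reals all_analysis.
From mathcomp Require Import ring lra.
Set Implicit Arguments. Unset Strict Implicit. Unset Printing Implicit Defensive.
Import Order.TTheory GRing.Theory Num.Theory.
Import numFieldNormedType.Exports.
Local Open Scope ring_scope.
Local Open Scope classical_set_scope.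

(* Put s = (r^k - 1)^(1/k) and a_n = s / r^n.  The n-th factor is the exponential
   of the tail sum_(i >= k) c_i (a_n x)^i = c_k x^k a_n^k + O(a_n^(k+1)), and
   sum_(n >= 1) a_n^k = (r^k - 1) sum_(n >= 1) r^(-kn) = 1.  Hence the product
   converges to exp(c_k x^k + H) with |H| = O(s), and s -> 0 as r -> 1+. *)
Lemma sumr_geometric_le {R : realType} (a : R) (m n : nat) : 0 <= a < 1 ->
  \sum_(m <= i < n) a ^+ i <= a ^+ m / (1 - a).
Proof.
move=> /andP[a0 a1]; have a1' : 0 < 1 - a by rewrite subr_gt0.
have [mn|nm] := leqP m n; last first.
  by rewrite big_geq ?(ltnW nm) // divr_ge0 ?exprn_ge0 // ltW.
rewrite -(subnKC mn) geometric_partial_tail geometric_seriesE ?lt_eqF //=.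
rewrite ler_wpM2r ?invr_ge0 ?(ltW a1') // ler_piMr ?exprn_ge0 //.
by rewrite lerBlDr lerDl exprn_ge0.
Qed.

Lemma norm_sum_geometric_le {R : realType} (b : nat -> R) (a M : R) (m n : nat) :
  0 <= a <= 1/2 -> 0 <= M -> (forall i, (m <= i)%N -> `|b i| <= M) ->
  `|\sum_(m <= i < n) b i * a ^+ i| <= 2 * M * a ^+ m.
Proof.
move=> /andP[a0 a_half] M0 bM.
apply: le_trans (ler_norm_sum _ _ _) _.
apply: (@le_trans _ _ (M * \sum_(m <= i < n) a ^+ i)).
  rewrite mulr_sumr; apply: ler_sum_nat => i /andP[mi _].
  by rewrite normrM (ger0_norm (exprn_ge0 _ a0)) ler_wpM2r ?exprn_ge0 ?bM.
have a1 : 0 <= a < 1 by rewrite a0 /=; lra.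
rewrite (mulrC 2 M) -mulrA ler_wpM2l //; apply: le_trans (sumr_geometric_le m n a1) _.
rewrite ler_pdivrMr; last by lra.
by rewrite mulrAC ler_peMl ?exprn_ge0 //; lra.
Qed.

Lemma cvg_series_perturb {R : realType} (u w : R ^nat) (C e W : R) :
  0 <= e -> (forall n, 0 <= w n) -> series w @ \oo --> W ->
  (forall n, `|u n - C * w n| <= e * w n) ->
  exists2 U, series u @ \oo --> U & `|U - C * W| <= e * W.
Proof.
move=> e0 w0 cw uw.
set h := fun n => u n - C * w n.
have ew_cvg : series (e *: w) @ \oo --> e * W by rewrite seriesZ; exact: cvgZr.
have h_normed : cvgn [normed series h].
  apply: (@series_le_cvg _ _ (e *: w)) => // [n|n|]; last exact: cvgP ew_cvg.
  - by rewrite normr_ge0.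
  - by rewrite mulr_ge0.
have h_cvg := normed_cvg h_normed.
exists (limn (series h) + C * W).
  have -> : series u = (fun N => series h N + C * series w N).
    apply/funext => N; rewrite /series /= mulr_sumr -big_split /=.
    by apply: eq_bigr => n _; rewrite /h subrK.
  by apply: cvgD => //; apply: cvgM => //; exact: cvg_cst.
rewrite addrK; apply: le_trans (lim_series_norm h_normed) _.
rewrite -(cvg_lim _ ew_cvg) //; apply: lim_series_le => //; exact: cvgP ew_cvg.
Qed.

Lemma near_right_interval {R : realType} (x : R) (P : R -> Prop) :
  (\forall y \near x^'+, P y) -> exists2 d : R, 0 < d & forall y, x < y < x + d -> P y.
Proof.
move=> /nbhs_ballP[d /= d0 ball_P]; exists d => // y /andP[xy yd].
apply: ball_P => //; rewrite /ball /= ltr_distlC; apply/andP; split => //.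
by rewrite (lt_trans _ xy) // ltrBlDr ltrDl.
Qed.

Lemma cvg_continuous_perturb {T : Type} {R : realType} (F : set_system T)
    {FF : Filter F} (phi : R -> R) (g b : T -> R) (C : R) :
  {for C, continuous phi} -> b @ F --> 0 ->
  (\forall t \near F, exists2 U, g t = phi U & `|U - C| <= b t) ->
  g @ F --> phi C.
Proof.
move=> phiC b0 gU; apply/cvgrPdist_lt => eps eps0.
move: phiC => /cvgrPdist_lt/(_ eps eps0)/nbhs_ballP[del /= del0 phi_ball].
near=> t; have /(_ _)[//|U -> bU] := near gU t; apply: phi_ball.
rewrite /ball /= distrC (le_lt_trans bU) //.
by near: t; apply: (cvgr_lt 0).
Unshelve. all: by end_near.
Qed.

Section LogSeries.
Variables (R : realType) (c : nat -> R).

Lemma logserS (y : R) (n : nat) : (0 < n)%N ->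
  logser c y n.+1 = logser c y n + c n * y ^+ n.
Proof. by move=> n0; rewrite /logser big_nat_recr. Qed.

Lemma prod_fcomp (y : R) (k : nat) :
  \prod_(1 <= i < k) fcomp c i y = expR (logser c y k).
Proof. by rewrite /logser expR_sum. Qed.

Lemma logser_term_bounded (y : R) : cvgn (logser c y) ->
  exists2 M, 0 <= M & forall i, (0 < i)%N -> `|c i * y ^+ i| <= M.
Proof.
move=> /cvg_seq_bounded[B0 [_ /(_ (B0 + 1))]]; rewrite ltrDl ltr01 => /(_ isT).
set B := B0 + 1 => B_ub; have {}B_ub n : `|logser c y n| <= B by exact: B_ub.
exists (B + B); first by have := B_ub 0%N; rewrite /logser big_geq // normr0 => ?; lra.
move=> i i0; have -> : c i * y ^+ i = logser c y i.+1 - logser c y i.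
  by rewrite logserS // addrC addKr.
exact: le_trans (ler_normB _ _) (lerD _ _).
Qed.

Lemma logser_tail_le (y a M : R) (K : nat) : (0 < K)%N ->
  0 <= a <= 1/2 -> 0 <= M -> (forall i, (K <= i)%N -> `|c i * y ^+ i| <= M) ->
  cvgn (logser c (a * y)) ->
  `|limn (logser c (a * y)) - logser c (a * y) K| <= 2 * M * a ^+ K.
Proof.
move=> K0 a_half M0 cM cv.
set L := logser c (a * y).
have cv_tail : (fun N => L N - L K) @ \oo --> limn L - L K.
  by apply: cvgB => //; exact: cvg_cst.
apply: (cvgr_to_le (cvg_norm cv_tail)); near=> N.
have KN : (K <= N)%N by near: N; exact: nbhs_infty_ge.
rewrite /L /logser (big_cat_nat K0 KN) /= addrAC subrr add0r.
under eq_bigr do rewrite exprMn mulrCA mulrC.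
exact: norm_sum_geometric_le.
Unshelve. all: by end_near.
Qed.

End LogSeries.

Definition kroot_gap {R : realType} (k : nat) (r : R) : R :=
  powR (r ^+ k - 1) (k%:R)^-1.

Lemma kroot_gapXn {R : realType} (k : nat) (r : R) : (0 < k)%N -> 1 <= r ->
  kroot_gap k r ^+ k = r ^+ k - 1.
Proof.
move=> k0 r1; have gap0 : 0 <= r ^+ k - 1 by rewrite subr_ge0 exprn_ege1.
rewrite -powR_mulrn ?powR_ge0 // -powRrM mulVf ?pnatr_eq0 -?lt0n // powRr1 //.
Qed.

Lemma kroot_gap_cvg0 {R : realType} (k : nat) : (0 < k)%N ->
  kroot_gap k r @[r --> (1 : R)^'+] --> 0.
Proof.
move=> k0.
have gap_cvg : (fun r : R => r ^+ k - 1) @ (1 : R)^'+ --> (0 : R)^'+.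
  have : (fun r : R => r ^+ k - 1) @ (1 : R) --> ((1 : R) ^+ k - 1 : R).
    by apply: cvgB; [exact: exprn_continuous | exact: cvg_cst].
  rewrite expr1n subrr => cv P /= HP.
  have {}HP := cv _ HP; change (\forall r \near 1^'+, P (r ^+ k - 1)); near=> r.
  have r1 : 1 < r by near: r; exact: nbhs_right_gt.
  suff: 0 < r ^+ k - 1 -> P (r ^+ k - 1) by apply; rewrite subr_gt0 exprn_egt1 // -lt0n.
  by near: r; apply: cvg_within; exact: HP.
have powR_cvg : powR x (k%:R^-1) @[x --> (0 : R)^'+] --> (0 : R).
  by apply: powR_cvg0; rewrite invr_gt0 ltr0n.
exact: (cvg_comp _ _ gap_cvg powR_cvg).
Unshelve. all: by end_near.
Qed.

Lemma cvg_series_kroot_gap {R : realType} (k : nat) (r : R) : (0 < k)%N -> 1 < r ->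
  series (fun n => (kroot_gap k r / r ^+ n.+1) ^+ k) @ \oo --> (1 : R).
Proof.
move=> k0 r1; set q := (r ^+ k)^-1.
have rk1 : 1 < r ^+ k by rewrite exprn_egt1 // -lt0n.
have q_lt1 : `|q| < 1 by rewrite ger0_norm ?invr_ge0 ?ltW ?invf_lt1 // (lt_trans ltr01).
have -> : (fun n => (kroot_gap k r / r ^+ n.+1) ^+ k) = geometric ((r ^+ k - 1) * q) q.
  apply/funext => n /=; rewrite expr_div_n kroot_gapXn ?ltW // -mulrA -exprS /q.
  by rewrite exprVn -!exprM mulnC.
have sum_one : (r ^+ k - 1) * q * (1 - q)^-1 = 1.
  have rk0 : r ^+ k != 0 by rewrite gt_eqF // (lt_trans ltr01).
  have rk1' : r ^+ k - 1 != 0 by rewrite subr_eq0 gt_eqF.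
  by rewrite /q; field; rewrite rk0 rk1'.
by rewrite -[X in _ --> X]sum_one; exact: cvg_geometric_series.
Qed.

Lemma between0_scale {R : realType} (x a : R) : 0 <= a <= 1 -> between0 x (a * x).
Proof.
move=> /andP[a0 a1]; rewrite /between0 ge_min le_max.
have [x0|x0] := leP 0 x.
- by apply/andP; split; apply/orP; [left|right]; nra.
- by apply/andP; split; apply/orP; [right|left]; nra.
Qed.

Section PartialProducts.
Variables (R : realType) (x : R) (f : R -> R) (c : nat -> R) (k : nat) (M : R).
Hypotheses (k_pos : (0 < k)%N) (M_ge0 : 0 <= M)
  (cM : forall i, (0 < i)%N -> `|c i * x ^+ i| <= M)
  (ser_cvg : forall y, between0 x y -> cvgn (logser c y))
  (f_exp : forall y, between0 x y -> f y = expR (limn (logser c y))).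

Lemma partprod_cvg (r : R) : 1 < r -> kroot_gap k r <= 1/2 ->
  exists2 U, partprod f c k x r @ \oo --> expR U &
    `|U - c k * x ^+ k| <= 2 * M * kroot_gap k r.
Proof.
move=> r1 gap_half; set s := kroot_gap k r.
have s0 : 0 <= s by exact: powR_ge0.
(* a n is the scale of the factor of index n.+1: the product up to N.+1 is exp (series g N). *)
set a := fun n => s / r ^+ n.+1.
have a_le_s n : a n <= s.
  by rewrite ler_pdivrMr ?exprn_gt0 ?(lt_trans ltr01) // ler_peMr // exprn_ege1 // ltW.
have a0 n : 0 <= a n by rewrite divr_ge0 // exprn_ge0 // ltW // (lt_trans ltr01).
have a_half n : 0 <= a n <= 1/2 by rewrite a0 (le_trans (a_le_s n)).
have a_between n : between0 x (a n * x).
  by apply: between0_scale; rewrite a0 (le_trans (a_le_s n)) // (le_trans gap_half) //; lra.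
set g := fun n => limn (logser c (a n * x)) - logser c (a n * x) k.
have factorE n : Defs.factor f c k x r n.+1 = expR (g n).
  rewrite /Defs.factor /= -/(kroot_gap k r) -/s mulrAC -/(a n) f_exp //.
  by rewrite prod_fcomp -expRB.
have g_near n : `|g n - c k * x ^+ k * a n ^+ k| <= 2 * M * s * a n ^+ k.
  have -> : g n - c k * x ^+ k * a n ^+ k =
      limn (logser c (a n * x)) - logser c (a n * x) k.+1.
    by rewrite logserS // [(a n * x) ^+ k]exprMn /g; ring.
  have cM' i : (k < i)%N -> `|c i * x ^+ i| <= M.
    by move=> ki; apply: cM; exact: leq_ltn_trans ki.
  apply: le_trans (logser_tail_le (ltn0Sn k) (a_half n) M_ge0 cM' (ser_cvg (a_between n))) _.
  by rewrite exprS mulrA ler_wpM2r ?exprn_ge0 // ler_wpM2l ?mulr_ge0.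
have e0 : 0 <= 2 * M * s by rewrite !mulr_ge0.
have [U U_cvg U_bound] := cvg_series_perturb e0 (fun n => exprn_ge0 k (a0 n))
  (cvg_series_kroot_gap k_pos r1) g_near.
rewrite !mulr1 in U_bound; exists U => //.
rewrite -cvg_shiftS.
have -> : (fun N => partprod f c k x r N.+1) = expR \o series g.
  apply/funext => N /=; rewrite /partprod big_add1 /=.
  by under eq_bigr do rewrite factorE; rewrite -expR_sum.
by apply: continuous_cvg => //; exact: continuous_expR.
Qed.

End PartialProducts.

Theorem lemma3 (R : realType) (x : R) (f : R -> R) (c : nat -> R)
  (f_analytic : forall y, between0 x y -> analytic_at f y)
  (f_nonzero : forall y, between0 x y -> f y != 0)
  (f0 : f 0 = 1)
  (ser_cvg : forall y, between0 x y -> cvgn (logser c y))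
  (f_exp : forall y, between0 x y -> f y = expR (limn (logser c y)))
  (k : nat) (k_pos : (0 < k)%N) :
  exists2 d : R, 0 < d &
    (forall r, 1 < r < 1 + d -> cvgn (partprod f c k x r)) /\
    (fun r => limn (partprod f c k x r)) r @[r --> 1^'+] --> fcomp c k x.
Proof.
have x_between : between0 x x.
  by rewrite -[X in between0 x X]mul1r; apply: between0_scale; rewrite ler01 lexx.
have [M M0 cM] := logser_term_bounded (ser_cvg x x_between).
have [d d0 gap_half] : exists2 d : R, 0 < d & forall r, 1 < r < 1 + d -> kroot_gap k r <= 1/2.
  by apply: near_right_interval; apply: cvgr_le (kroot_gap_cvg0 k_pos) _ _; lra.
have partprod_cvg_d r : 1 < r < 1 + d -> exists2 U, partprod f c k x r @ \oo --> expR U &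
    `|U - c k * x ^+ k| <= 2 * M * kroot_gap k r.
  by move=> /andP[r1 rd]; apply: partprod_cvg => //; apply: gap_half; rewrite r1.
exists d => //; split=> [r /partprod_cvg_d[U /cvgP] //|].
apply: (@cvg_continuous_perturb _ _ _ _ expR _ (fun r => 2 * M * kroot_gap k r)).
- exact: continuous_expR.
- by rewrite -(mulr0 (2 * M)); apply: cvgM; [exact: cvg_cst | exact: kroot_gap_cvg0].
near=> r; have [|U U_cvg U_bound] := partprod_cvg_d r.
  apply/andP; split; near: r; [exact: nbhs_right_gt | apply: nbhs_right_lt; rewrite ltrDl //].
by exists U => //; exact: cvg_lim.
Unshelve. all: by end_near.
Qed.
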